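(* Let $G$ be a symmetric game with a common type space $T$ and belief maps $f_i:T\to\Delta\big((\prod_{k\ne i}\Delta A_k)\times T^{n-1}\big)$ as described in the context, and suppose there is exactly one superrationally justifiable mixed strategy $\sigma$. If each player $i$ has a superrational type $t_i$ and uses a superrational bayesian mixed strategy $\alpha_i$, then the profile $(\alpha_1(t_1),\ldots,\alpha_n(t_n))$ equals $(\sigma,\ldots,\sigma)$, which is a superrational profile of mixed strategies.
   Context: A game $G=\langle I,\{A_i\},\{\pi_i\}\rangle$ has players $I=\{1,\ldots,n\}$, finite action sets $A_i$ and payoffs $\pi_i:\prod_i A_i\to\mathbb{R}$. It is symmetric if $A_i=A_j$ for all $i,j$ and $\pi_i(a_1,\ldots,a_n)=\pi_{\tau^{-1}(i)}(a_{\tau(1)},\ldots,a_{\tau(n)})$ for every permutation $\tau$ of $I$, every profile and every $i$. $\Delta A_i$ is the set of mixed strategies on $A_i$; for $\boldsymbol\sigma=(\sigma_1,\ldots,\sigma_n)$, $E\pi_i(\boldsymbol\sigma)=\sum_{(a_1,\ldots,a_n)}\pi_i(a_1,\ldots,a_n)\prod_k\sigma_k(a_k)$. A mixed strategy $\sigma^*$ is superrationally justifiable (and $(\sigma^*,\ldots,\sigma^* )$ a superrational profile of mixed strategies) if $E\pi_i(\sigma^*,\ldots,\sigma^* )\ge E\pi_i(\sigma,\ldots,\sigma)$ for every $i$ and every mixed strategy $\sigma$. For a measurable space $X$, $\Delta X$ denotes probability measures on $X$, $(\Delta f)(\mu)=\mu\circ f^{-1}$, and $\delta_x$ is the Dirac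 measure at $x$. All players draw types from the same measurable space $T$ (the paper takes a universal type space), with measurable maps $f_i:T\to\Delta\big((\prod_{k\ne i}\Delta A_k)\times T^{n-1}\big)$. For $j\ne i$ let $\gamma_j$ and $\rho'_j$ be the projections from $(\prod_{k\ne i}\Delta A_k)\times T^{n-1}$ onto $\Delta A_j$ and onto player $j$'s type coordinate. A type $t$ of player $i$ is superrational if $\Delta\rho'_j(f_i(t))=\delta_t$ for all $j\ne i$ and there is a superrationally justifiable mixed strategy $\sigma$ with $\Delta\gamma_j(f_i(t))=\delta_\sigma$ for all $j\ne i$. A superrational bayesian mixed strategy for player $i$ is a function $\alpha_i:T\to\Delta A_i$ such that for each superrational type $t$, if $\Delta\gamma_j(f_i(t))=\delta_\sigma$ then $\alpha_i(t)=\sigma$. *)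

From HB Require Import structures.
From mathcomp Require Import all_boot all_order all_algebra all_fingroup.
From mathcomp Require Import all_classical all_reals all_analysis.
From mathcomp Require Import measurable_realfun.
Set Implicit Arguments. Unset Strict Implicit. Unset Printing Implicit Defensive.
Import Order.TTheory GRing.Theory Num.Theory.
Local Open Scope classical_set_scope.
Local Open Scope ring_scope.

Section Mixed.
Variables (A : finType) (R : realType) (hA : (0 < #|A|)%N).

Definition is_mixed (s : {ffun A -> R}) : bool :=
  [forall a, 0 <= s a] && (\sum_a s a == 1).

Record mixed_ := Mixed { mprob :> {ffun A -> R}; mprobP : is_mixed mprob }.

HB.instance Definition _ := [isSub for mprob].
HB.instance Definition _ := [Choice of mixed_ by <:].

(* the type of mixed strategies (tagged with the nonemptiness proof so that
   it can carry a canonical pointed/measurable structure) *)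
Definition mixed (hA' : (0 < #|A|)%N) : Type := mixed_.
Local Notation MS := (mixed hA).
HB.instance Definition _ := Choice.on MS.

Definition uniform_ffun : {ffun A -> R} := [ffun=> (#|A|%:R)^-1].
Lemma uniform_mixed : is_mixed uniform_ffun.
Proof.
apply/andP; split.
  by apply/forallP => a; rewrite ffunE invr_ge0 ler0n.
rewrite (eq_bigr (fun=> (#|A|%:R)^-1)); last by move=> a _; rewrite ffunE.
rewrite sumr_const.
have -> : #|[pred _ : A | true]| = #|A| by apply: eq_card.
by rewrite -(mulr_natl ((#|A|%:R)^-1 : R)) mulfV // pnatr_eq0 -lt0n.
Qed.

HB.instance Definition _ := isPointed.Build MS (Mixed uniform_mixed : MS).

(* Borel sigma-algebra of the simplex: generated by the coordinate maps *)
Definition mixed_coord (i : 'I_#|A|) (s : MS) : R := mprob s (enum_val i).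
Definition mixed_measurable : set (set MS) := g_sigma_preimage mixed_coord.

Let mixed0 : mixed_measurable set0.
Proof. exact: sigma_algebra0. Qed.
Let mixedC X : mixed_measurable X -> mixed_measurable (~` X).
Proof. exact: sigma_algebraC. Qed.
Let mixedU (F : (set MS)^nat) : (forall i, mixed_measurable (F i)) ->
  mixed_measurable (\bigcup_i (F i)).
Proof. exact: sigma_algebra_bigcup. Qed.

HB.instance Definition _ := @isMeasurable.Build default_measure_display
  MS mixed_measurable mixed0 mixedC mixedU.
End Mixed.

Definition symmetric_game (n : nat) (A : finType) (R : realType)
  (pi : 'I_n -> {ffun 'I_n -> A} -> R) : Prop :=
  forall (tau : {perm 'I_n}) (a : {ffun 'I_n -> A}) (i : 'I_n),
    pi i a = pi (tau^-1 i)%g [ffun k => a (tau k)].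

Definition Epi (n : nat) (A : finType) (R : realType) (hA : (0 < #|A|)%N)
  (pi : 'I_n -> {ffun 'I_n -> A} -> R) (i : 'I_n) (s : 'I_n -> @mixed A R hA) : R :=
  \sum_(a : {ffun 'I_n -> A}) pi i a * \prod_(k : 'I_n) mprob (s k) (a k).

Definition superrationally_justifiable (n : nat) (A : finType) (R : realType)
  (hA : (0 < #|A|)%N) (pi : 'I_n -> {ffun 'I_n -> A} -> R) (s : @mixed A R hA) : Prop :=
  forall (i : 'I_n) (s' : @mixed A R hA),
    Epi pi i (fun=> s') <= Epi pi i (fun=> s).

Definition superrational_profile (n : nat) (A : finType) (R : realType)
  (hA : (0 < #|A|)%N) (pi : 'I_n -> {ffun 'I_n -> A} -> R)
  (p : 'I_n -> @mixed A R hA) : Prop :=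
  exists2 s, superrationally_justifiable pi s & p = fun=> s.

(* Player i's belief space (prod_{k<>i} Delta A_k) x T^{n-1}; the opponents
   k <> i are enumerated as  lift i j  for  j : 'I_n.-1. *)
Definition belief_space (n : nat) (A : finType) (R : realType)
  (hA : (0 < #|A|)%N) (d : measure_display) (T : measurableType d) :=
  ((n.-1).-tuple (@mixed A R hA) * (n.-1).-tuple T)%type.

Definition gamma_proj (n : nat) (A : finType) (R : realType)
  (hA : (0 < #|A|)%N) (d : measure_display) (T : measurableType d)
  (j : 'I_n.-1) (w : @belief_space n A R hA d T) : @mixed A R hA := tnth w.1 j.
Definition rho_proj (n : nat) (A : finType) (R : realType)
  (hA : (0 < #|A|)%N) (d : measure_display) (T : measurableType d)
  (j : 'I_n.-1) (w : @belief_space n A R hA d T) : T := tnth w.2 j.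

Definition push_is_dirac d1 d2 (X : measurableType d1) (Y : measurableType d2)
  (R : realType) (mu : set X -> \bar R) (g : X -> Y) (y : Y) : Prop :=
  forall B : set Y, measurable B -> mu (g @^-1` B) = @dirac _ Y y R B.

Definition superrational_type (n : nat) (A : finType) (R : realType)
  (hA : (0 < #|A|)%N) (pi : 'I_n -> {ffun 'I_n -> A} -> R)
  (d : measure_display) (T : measurableType d)
  (f : 'I_n -> T -> probability (@belief_space n A R hA d T) R) (i : 'I_n) (t : T) : Prop :=
  (forall j : 'I_n.-1, push_is_dirac (f i t) (rho_proj j) t) /\
  exists2 s : @mixed A R hA, superrationally_justifiable pi s &
    forall j : 'I_n.-1, push_is_dirac (f i t) (gamma_proj j) s.

Definition superrational_bayesian (n : nat) (A : finType) (R : realType)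
  (hA : (0 < #|A|)%N) (pi : 'I_n -> {ffun 'I_n -> A} -> R)
  (d : measure_display) (T : measurableType d)
  (f : 'I_n -> T -> probability (@belief_space n A R hA d T) R) (i : 'I_n)
  (alpha : T -> @mixed A R hA) : Prop :=
  forall t : T, superrational_type pi f i t ->
    forall s : @mixed A R hA,
      (forall j : 'I_n.-1, push_is_dirac (f i t) (gamma_proj j) s) ->
      alpha t = s.

From HB Require Import structures.
From mathcomp Require Import all_boot all_order all_algebra all_fingroup.
From mathcomp Require Import all_classical all_reals all_analysis.
From mathcomp Require Import measurable_realfun.
Import Order.TTheory GRing.Theory Num.Theory.
Local Open Scope classical_set_scope.
Local Open Scope ring_scope.

(* A superrational type t of player i believes that every opponent plays one
   and the same superrationally justifiable s, and a superrational bayesian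
   strategy must play that s at t.  Hence each alpha_i (t_i) is
   superrationally justifiable, and uniqueness makes it sigma. *)

Section SuperrationalBayesian.
Variables (n : nat) (A : finType) (R : realType) (hA : (0 < #|A|)%N).
Variables (pi : 'I_n -> {ffun 'I_n -> A} -> R).
Variables (d : measure_display) (T : measurableType d).
Variable (f : 'I_n -> T -> probability (@belief_space n A R hA d T) R).

Lemma superrational_bayesian_justifiable (i : 'I_n) (alpha : T -> @mixed A R hA)
    (t : T) :
  superrational_type pi f i t -> superrational_bayesian pi f i alpha ->
  superrationally_justifiable pi (alpha t).
Proof.
move=> tS alphaS; have [_ [s sJ belief_s]] := tS.
by rewrite (alphaS t tS s belief_s).
Qed.

End SuperrationalBayesian.

Theorem theorem2 (n : nat) (A : finType) (R : realType) (hA : (0 < #|A|)%N)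
  (pi : 'I_n -> {ffun 'I_n -> A} -> R)
  (d : measure_display) (T : measurableType d)
  (f : 'I_n -> T -> probability (@belief_space n A R hA d T) R)
  (sigma : @mixed A R hA) (t : 'I_n -> T) (alpha : 'I_n -> T -> @mixed A R hA) :
  symmetric_game pi ->
  (forall (i : 'I_n) (S : set (@belief_space n A R hA d T)), measurable S ->
     measurable_fun [set: T] ((fun x : T => f i x S) : T -> \bar R)) ->
  superrationally_justifiable pi sigma ->
  (forall s : @mixed A R hA, superrationally_justifiable pi s -> s = sigma) ->
  (forall i : 'I_n, superrational_type pi f i (t i)) ->
  (forall i : 'I_n, superrational_bayesian pi f i (alpha i)) ->
  (fun i => alpha i (t i)) = (fun=> sigma) /\
  superrational_profile pi (fun i => alpha i (t i)).
Proof.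
move=> _ _ sigmaJ sigma_unique tS alphaS.
have play_sigma : (fun i => alpha i (t i)) = (fun=> sigma).
  apply: funext => i; apply: sigma_unique.
  exact: superrational_bayesian_justifiable (tS i) (alphaS i).
by split=> //; exists sigma.
Qed.
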